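(* Let $\bar x\in\Phi$ be a local second-order weak sharp minimizer of problem (P) with corresponding constants $\kappa>0$ and $\delta>0$. Then for every $x\in S\cap B_\delta(\bar x)$, every $d\in C(x)$, and every $\lambda\in\mathbb{R}^m$ with $\nabla_xL(x,\lambda)=0$, one has (i) $\sigma_{\nabla g(x)(T''_\Phi(x;d))}(\lambda)\le0$; (ii) $\nabla^2_{xx}L(x,\lambda)(d,d)-\sigma_{\nabla g(x)(T^2_\Phi(x;d))+\nabla^2g(x)(d,d)}(\lambda)\ge 2\kappa\,[\mathrm{dist}(d,T_S(x))]^2$.
   Context: Standing setting: $f:\mathbb{R}^n\to\mathbb{R}$ and $g:\mathbb{R}^n\to\mathbb{R}^m$ are twice continuously differentiable, $K\subset\mathbb{R}^m$ is closed, and (P) is the problem $\min f(x)$ s.t. $g(x)\in K$. $\Phi:=\{x: g(x)\in K\}$ and $S$ is the (nonempty) set of optimal solutions of (P). $L(x,\lambda):=f(x)+\langle g(x),\lambda\rangle$. $\bar x\in\Phi$ is a local second-order weak sharp minimizer with constants $\kappa,\delta>0$ if $f(x)\ge f(\bar x)+\kappa[\mathrm{dist}(x,S)]^2$ for all $x\in\Phi\cap B_\delta(\bar x)$. For a closed set $A$ and $\bar x\in A$: $T_A(\bar x):=\{d:\exists t_k\downarrow0,d_k\to d,\ \bar x+t_kd_k\in A\}$; for $d\in T_A(\bar x)$, $T^2_A(\bar x;d):=\{w:\exists t_k\downarrow0,w_k\to w,\ \bar x+t_kd+\tfrac12t_k^2w_k\in A\}$ and $T''_A(\bar x;d):=\{w:\exists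 (t_k,r_k)\downarrow(0,0),\ t_k/r_k\to0,\ w_k\to w,\ \bar x+t_kd+\tfrac12t_kr_kw_k\in A\}$. $C(x):=\{d:\nabla g(x)d\in T_K(g(x)),\ \nabla f(x)d\le0\}$. $\sigma_A(\lambda):=\sup_{u\in A}\langle\lambda,u\rangle$ ($-\infty$ if $A=\emptyset$). $\nabla^2g(x)(d,d):=(d^T\nabla^2g_i(x)d)_{i=1}^m$, $\nabla g(x)(A):=\{\nabla g(x)u:u\in A\}$. *)

From HB Require Import structures.
From mathcomp Require Import all_boot all_order all_algebra.
From mathcomp Require Import all_classical all_reals all_analysis.
Set Implicit Arguments. Unset Strict Implicit. Unset Printing Implicit Defensive.
Import Order.TTheory GRing.Theory Num.Theory.
Import numFieldNormedType.Exports.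
Local Open Scope classical_set_scope.
Local Open Scope ring_scope.

Section Defs.
Variable R : realType.

Definition dotv {n : nat} (u v : 'rV[R]_n) : R := \sum_(i < n) u ord0 i * v ord0 i.
Definition enorm {n : nat} (u : 'rV[R]_n) : R := Num.sqrt (dotv u u).

Definition eucl_dist {n : nat} (x : 'rV[R]_n) (A : set 'rV[R]_n) : R :=
  inf [set enorm (x - a) | a in A].

Definition D2 {n : nat} {V : normedModType R} (h : 'rV[R]_n -> V)
  (x v w : 'rV[R]_n) : V := 'd (fun z => 'd h z v) x w.

Definition C2 {n : nat} {V : normedModType R} (h : 'rV[R]_n -> V) : Prop :=
  (forall x, differentiable h x) /\
  (forall v x, differentiable (fun z => 'd h z v) x) /\
  (forall v w, continuous (fun z => D2 h z v w)).

Definition tcone {n : nat} (A : set 'rV[R]_n) (x : 'rV[R]_n) : set 'rV[R]_n :=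
  [set d | exists (t : nat -> R) (dk : nat -> 'rV[R]_n),
     (forall k, 0 < t k) /\ t @ \oo --> (0 : R) /\ dk @ \oo --> d /\
     (forall k, A (x + t k *: dk k))].

Definition tset2 {n : nat} (A : set 'rV[R]_n) (x d : 'rV[R]_n) : set 'rV[R]_n :=
  [set w | exists (t : nat -> R) (wk : nat -> 'rV[R]_n),
     (forall k, 0 < t k) /\ t @ \oo --> (0 : R) /\ wk @ \oo --> w /\
     (forall k, A (x + t k *: d + (2^-1 * t k ^+ 2) *: wk k))].

Definition tsetpp {n : nat} (A : set 'rV[R]_n) (x d : 'rV[R]_n) : set 'rV[R]_n :=
  [set w | exists (t r : nat -> R) (wk : nat -> 'rV[R]_n),
     (forall k, 0 < t k) /\ (forall k, 0 < r k) /\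
     t @ \oo --> (0 : R) /\ r @ \oo --> (0 : R) /\
     (fun k => t k / r k) @ \oo --> (0 : R) /\ wk @ \oo --> w /\
     (forall k, A (x + t k *: d + (2^-1 * t k * r k) *: wk k))].

(* support function sigma_A(lambda), extended-real valued (-oo on the empty set) *)
Definition suppf {m : nat} (A : set 'rV[R]_m) (lam : 'rV[R]_m) : \bar R :=
  ereal_sup [set (dotv u lam)%:E | u in A].

Definition feas {n m : nat} (g : 'rV[R]_n -> 'rV[R]_m) (K : set 'rV[R]_m) :
  set 'rV[R]_n := [set x | K (g x)].

Definition solset {n m : nat} (f : 'rV[R]_n -> R) (g : 'rV[R]_n -> 'rV[R]_m)
  (K : set 'rV[R]_m) : set 'rV[R]_n :=
  [set x | feas g K x /\ forall y, feas g K y -> f x <= f y].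

Definition Lag {n m : nat} (f : 'rV[R]_n -> R) (g : 'rV[R]_n -> 'rV[R]_m)
  (lam : 'rV[R]_m) (x : 'rV[R]_n) : R := f x + dotv (g x) lam.

Definition critcone {n m : nat} (f : 'rV[R]_n -> R) (g : 'rV[R]_n -> 'rV[R]_m)
  (K : set 'rV[R]_m) (x : 'rV[R]_n) : set 'rV[R]_n :=
  [set d | tcone K (g x) ('d g x d) /\ 'd f x d <= 0].

Definition so_weak_sharp {n m : nat} (f : 'rV[R]_n -> R) (g : 'rV[R]_n -> 'rV[R]_m)
  (K : set 'rV[R]_m) (xbar : 'rV[R]_n) (kappa delta : R) : Prop :=
  feas g K xbar /\
  forall x, feas g K x -> enorm (x - xbar) < delta ->
    f xbar + kappa * eucl_dist x (solset f g K) ^+ 2 <= f x.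

End Defs.

From HB Require Import structures.
From mathcomp Require Import all_boot all_order all_algebra.
From mathcomp Require Import all_classical all_reals all_analysis.
From mathcomp Require Import ring lra.
Import Order.TTheory GRing.Theory Num.Theory.
Import numFieldNormedType.Exports.
Local Open Scope classical_set_scope.
Local Open Scope ring_scope.

(* Along feasible points [x + t_k u_k] with [t_k -> 0] and [u_k -> d], the
   second-order expansion
     f (x + t u) = f x + t f'(x) u + t^2/2 f''(x)(d,d) + o(t^2),
   obtained from the mean value theorem, turns the two hypotheses into limit
   inequalities.  For [w] in T''_Phi(x;d), where [u_k = d + r_k w_k / 2] and
   [t_k / r_k -> 0], minimality of [f] at [x] together with [f'(x) d <= 0] gives
   [f'(x) w >= 0].  For [w] in T^2_Phi(x;d), where [u_k = d + t_k w_k / 2], weak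
   sharpness bounds [kappa (dist(x + t_k u_k, S) / t_k)^2] by a sequence tending to
   [(f'(x) w + f''(x)(d,d)) / 2]; rescaling nearby points of [S] and extracting a
   convergent subsequence bounds [dist(d, T_S(x))] by the same quantity.  Finally
   stationarity of the Lagrangian, [f'(x) = - <g'(x) _, lam>], rewrites both
   inequalities as bounds on the support functions. *)

Section euclidean_norm.
Variable R : realType.
Local Set Implicit Arguments. Local Unset Strict Implicit.

Lemma dotvDl n (a b c : 'rV[R]_n) : dotv (a + b) c = dotv a c + dotv b c.
Proof. by rewrite /dotv -big_split; apply: eq_bigr => i _; rewrite mxE mulrDl. Qed.

Lemma dotvv_ge0 n (u : 'rV[R]_n) : 0 <= dotv u u.
Proof. by apply: sumr_ge0 => i _; rewrite -expr2 sqr_ge0. Qed.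

Lemma enorm_ge0 n (u : 'rV[R]_n) : 0 <= enorm u.
Proof. exact: sqrtr_ge0. Qed.

Lemma normr_coord_le_enorm n (u : 'rV[R]_n) i : `|u 0 i| <= enorm u.
Proof.
rewrite /enorm -sqrtr_sqr ler_sqrt ?dotvv_ge0 // /dotv (bigD1 i) //= expr2.
by rewrite lerDl; apply: sumr_ge0 => j _; rewrite -expr2 sqr_ge0.
Qed.

Lemma normr_le_enorm n (u : 'rV[R]_n) : `|u| <= enorm u.
Proof.
rewrite [`|u|]mx_normrE; apply: bigmax_le; first exact: enorm_ge0.
by move=> [i j] _ /=; rewrite (ord1 i); apply: normr_coord_le_enorm.
Qed.

Lemma enormZ n (c : R) (u : 'rV[R]_n) : enorm (c *: u) = `|c| * enorm u.
Proof.
rewrite /enorm /dotv.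
have -> : \sum_(i < n) (c *: u) 0 i * (c *: u) 0 i = c ^+ 2 * \sum_(i < n) u 0 i * u 0 i.
  by rewrite mulr_sumr; apply: eq_bigr => i _; rewrite !mxE; ring.
by rewrite sqrtrM ?sqr_ge0 // sqrtr_sqr.
Qed.

Lemma cvg_coord {T : Type} {F : set_system T} {FF : Filter F} n
    (a : T -> 'rV[R]_n) (b : 'rV[R]_n) i :
  a x @[x --> F] --> b -> a x 0 i @[x --> F] --> b 0 i.
Proof. exact: (continuous_cvg _ (@coord_continuous _ _ _ 0 i _)). Qed.

Lemma cvg_enorm {T : Type} {F : set_system T} {FF : Filter F} n
    (a : T -> 'rV[R]_n) (b : 'rV[R]_n) :
  a x @[x --> F] --> b -> enorm (a x) @[x --> F] --> enorm b.
Proof.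
move=> ab; apply: (continuous_cvg _ (@sqrt_continuous _ _)).
by apply: cvg_big => // [|i _]; [exact: add_continuous | apply: cvgM; exact: cvg_coord].
Qed.

End euclidean_norm.

Section euclidean_distance.
Variable R : realType.
Local Set Implicit Arguments. Local Unset Strict Implicit.

Lemma eucl_dist_ge0 n (x : 'rV[R]_n) A : A !=set0 -> 0 <= eucl_dist x A.
Proof.
move=> [a Aa]; apply: lb_le_inf; first by exists (enorm (x - a)), a.
by move=> _ [b _ <-]; apply: enorm_ge0.
Qed.

Lemma eucl_dist_le n (x : 'rV[R]_n) A a : A a -> eucl_dist x A <= enorm (x - a).
Proof.
move=> Aa; apply: ge_inf; last by exists a.
by exists 0 => _ [b _ <-]; apply: enorm_ge0.
Qed.

Lemma eucl_dist_lt n (x : 'rV[R]_n) A r : A !=set0 -> eucl_dist x A < r ->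
  exists2 a, A a & enorm (x - a) < r.
Proof.
move=> [a Aa] /inf_lt [|_ [b Ab <-] lt]; first by exists (enorm (x - a)), a.
by exists b.
Qed.

End euclidean_distance.

Section sequences.
Variable R : realType.
Local Set Implicit Arguments. Local Unset Strict Implicit.

Lemma cvgn_normr_ub (V : normedModType R) (u : nat -> V) (l : V) :
  u k @[k --> \oo] --> l -> exists M, forall k, `|u k| <= M.
Proof.
move=> ul; have := cvg_seq_bounded (cvgP _ ul); move/ex_bound => [|M HM].
  exact: (@globally_properfilter _ _ 0%N).
by exists M => k; exact: HM.
Qed.

Lemma cvg_scaler0_bounded (V : normedModType R) (s : nat -> R) (a : nat -> V) M :
  s k @[k --> \oo] --> 0 -> (forall k, `|a k| <= M) ->
  (s k *: a k) @[k --> \oo] --> (0 : V).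
Proof.
move=> /cvgr0Pnorm_le s0 aM.
have M1 : 0 < M + 1 by rewrite ltr_wpDl // (le_trans _ (aM 0%N)).
apply/cvgr0Pnorm_le => e e0.
move: (s0 _ (divr_gt0 e0 M1)); apply: filterS => k sk.
rewrite normrZ; apply: le_trans (ler_wpM2l (normr_ge0 _) (aM k)) _.
move: sk; rewrite ler_pdivlMr // => sk.
have := normr_ge0 (s k); nra.
Qed.

Lemma cvg_addr_scaler0 (V : normedModType R) (d l : V) (s : nat -> R) (w : nat -> V) :
  s k @[k --> \oo] --> 0 -> w k @[k --> \oo] --> l -> (d + s k *: w k) @[k --> \oo] --> d.
Proof.
move=> s0 w_l; have [B wB] := cvgn_normr_ub w_l.
rewrite -[X in _ --> X]addr0; apply: cvgD; first exact: cvg_cst.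
exact: cvg_scaler0_bounded s0 wB.
Qed.

Lemma cvg_subseq {T : topologicalType} (a : nat -> T) (l : T) (kk : nat -> nat) :
  a k @[k --> \oo] --> l -> (forall j, (j <= kk j)%N) -> a (kk j) @[j --> \oo] --> l.
Proof.
move=> al kj; apply: (cvg_comp _ _ _ al).
by apply/cvgnyPge => A; exists A => // j /= Aj; exact: leq_trans Aj (kj j).
Qed.

Lemma cvg_subseq_bounded n (v : nat -> 'rV[R]_n) M : (forall k, `|v k| <= M) ->
  exists p : 'rV[R]_n, exists2 kk : nat -> nat,
    (forall j, (j <= kk j)%N) & v (kk j) @[j --> \oo] --> p.
Proof.
move=> vM.
have M1 : 0 < M + 1 by rewrite ltr_wpDl // (le_trans _ (vM 0%N)).
pose A := closed_ball (0 : 'rV[R]_n) (M + 1).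
have inA y : A y <-> `|y| <= M + 1.
  by rewrite /A closed_ballE // /closed_ball_ /= sub0r normrN.
have A_compact : compact A.
  apply: bounded_closed_compact; last exact: closed_ball_closed.
  rewrite /= /bounded_near; near=> M' => y /inA Hy.
  apply: le_trans Hy _; near: M'; apply: nbhs_pinfty_ge; exact: num_real.
have [p [_ p_cluster]] : A `&` cluster (v @ \oo) !=set0.
  apply: A_compact.
  by exists 0%N => // k _ /=; apply/inA; apply: le_trans (vM k) _; rewrite lerDl.
have near_p j : exists k, (j <= k)%N /\ `|p - v k| < (j.+1%:R)^-1.
  have j1 : 0 < (j.+1%:R : R)^-1 by rewrite invr_gt0 ltr0n.
  have [q [[k jk <-] bq]] := p_cluster [set v k | k in [set k | (j <= k)%N]]
    (ball p (j.+1%:R)^-1) (ex_intro2 _ _ j I (fun k jk => ex_intro2 _ _ k jk erefl))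
    (nbhsx_ballx _ _ j1).
  by exists k; split => //; move: bq; rewrite -ball_normE.
have [kk Hkk] := choice near_p.
exists p, kk; first by move=> j; case: (Hkk j).
apply/cvgrPdist_lt => e e0.
have /cvgr0Pnorm_lt harmonic0 := @cvg_harmonic R.
move: (harmonic0 e e0); apply: filterS => j hj.
case: (Hkk j) => _ hk; apply: lt_trans hk _.
by move: hj; rewrite /= ger0_norm // invr_ge0 ler0n.
Unshelve. all: by end_near.
Qed.

End sequences.

Section calculus.
Variable R : realType.
Local Set Implicit Arguments. Local Unset Strict Implicit.
Implicit Types (V W : normedModType R).

Lemma differentiable_sumf V W (I : Type) (r : seq I) (F : I -> V -> W) x :
  (forall i, differentiable (F i) x) -> differentiable (fun z => \sum_(i <- r) F i z) x.
Proof.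
move=> dF; elim: r => [|a r IH].
  by under eq_fun do rewrite big_nil; exact: differentiable_cst.
under eq_fun do rewrite big_cons; exact: (differentiableD (dF a) IH).
Qed.

Lemma diff_sumf V W (I : Type) (r : seq I) (F : I -> V -> W) x w :
  (forall i, differentiable (F i) x) ->
  'd (fun z => \sum_(i <- r) F i z) x w = \sum_(i <- r) 'd (F i) x w.
Proof.
move=> dF; elim: r => [|a r IH].
  by under eq_fun do rewrite big_nil; rewrite big_nil diff_cst.
under eq_fun do rewrite big_cons; rewrite big_cons -IH.
by rewrite (diffD (dF a) (differentiable_sumf r dF)).
Qed.

Lemma diff_coord V p q (G : V -> 'M[R]_(p, q)) x i j w :
  differentiable G x -> 'd (fun z => G z i j) x w = 'd G x w i j.
Proof.
move=> dG; have @c : {linear 'M[R]_(p, q) -> R}.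
  by exists (fun N : 'M[R]_(_, _) => N i j); do 2![eexists]; do ?[constructor];
     rewrite ?mxE// => ? *; rewrite ?mxE//; move=> ?; rewrite !mxE.
have c_cont : continuous c by exact: coord_continuous.
have dc : differentiable c (G x) by exact: linear_differentiable.
rewrite (_ : (fun z => G z i j) = c \o G) //.
rewrite (diff_comp dG dc) /=.
exact: (congr1 (fun h => h ('d G x w)) (diff_lin (G x) c_cont)).
Qed.

Lemma differentiable_dotv V m (G : V -> 'rV[R]_m) lam x :
  differentiable G x -> differentiable (fun z => dotv (G z) lam) x.
Proof.
move=> dG; have -> : (fun z => dotv (G z) lam) = fun z => \sum_(i < m) lam 0 i * G z 0 i.
  by apply/funext => z; apply: eq_bigr => i _; rewrite mulrC.
apply: differentiable_sumf => i; apply: differentiableZ.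
exact: differentiable_comp (differentiable_coord _ 0 i).
Qed.

Lemma diff_dotv V m (G : V -> 'rV[R]_m) lam x w :
  differentiable G x -> 'd (fun z => dotv (G z) lam) x w = dotv ('d G x w) lam.
Proof.
move=> dG; have -> : (fun z => dotv (G z) lam) = fun z => \sum_(i < m) lam 0 i * G z 0 i.
  by apply/funext => z; apply: eq_bigr => i _; rewrite mulrC.
have dGi i : differentiable (fun z => G z 0 i) x.
  exact: differentiable_comp (differentiable_coord _ 0 i).
rewrite diff_sumf => [|i]; last exact: differentiableZ.
by apply: eq_bigr => i _; rewrite diffZ //= diff_coord // mulrC.
Qed.

Lemma diff_Lag n m (f : 'rV[R]_n -> R) (g : 'rV[R]_n -> 'rV[R]_m) lam x w :
  differentiable f x -> differentiable g x ->
  'd (Lag f g lam) x w = 'd f x w + dotv ('d g x w) lam.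
Proof.
move=> df dg; rewrite (diffD df (differentiable_dotv lam dg)) /=.
by rewrite diff_dotv.
Qed.

Lemma linear_coord_sum n (L : {linear 'rV[R]_n -> R}) (v : 'rV[R]_n) :
  L v = \sum_(j < n) v 0 j * L 'e_j.
Proof.
by rewrite {1}(row_sum_delta v) linear_sum; apply: eq_bigr => j _; rewrite linearZ.
Qed.

Lemma D2_coord_sum n (f : 'rV[R]_n -> R) x (u w : 'rV[R]_n) :
  (forall j, differentiable (fun z => 'd f z 'e_j) x) ->
  D2 f x u w = \sum_(j < n) u 0 j * D2 f x 'e_j w.
Proof.
move=> dj; rewrite /D2.
have -> : (fun z => 'd f z u) = fun z => \sum_(j < n) u 0 j * 'd f z 'e_j.
  by apply/funext => z; exact: linear_coord_sum.
have dF j : differentiable (fun z => u 0 j * 'd f z 'e_j) x by exact: differentiableZ.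
apply: eq_trans (diff_sumf _ _ dF) _; apply: eq_bigr => j _.
exact: (congr1 (fun h => h w) (diffZ (u 0 j) (dj j))).
Qed.

Lemma D2_Lag n m (f : 'rV[R]_n -> R) (g : 'rV[R]_n -> 'rV[R]_m) lam x u w :
  (forall z, differentiable f z) -> (forall z, differentiable g z) ->
  differentiable (fun z => 'd f z u) x -> differentiable (fun z => 'd g z u) x ->
  D2 (Lag f g lam) x u w = D2 f x u w + dotv (D2 g x u w) lam.
Proof.
move=> df dg dfu dgu; rewrite /D2.
have -> : (fun z => 'd (Lag f g lam) z u) = (fun z => 'd f z u) + (fun z => dotv ('d g z u) lam).
  by apply/funext => z; exact: diff_Lag.
apply: eq_trans (congr1 (fun h => h w) (diffD dfu (differentiable_dotv lam dgu))) _.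
exact: (congr1 (GRing.add _) (diff_dotv lam w dgu)).
Qed.

End calculus.

Section taylor.
Variable R : realType.
Local Set Implicit Arguments. Local Unset Strict Implicit.

Lemma cvg_diff_quotient (V : normedModType R) (phi : V -> R) x (s : nat -> R)
    (a : nat -> V) M :
  differentiable phi x -> s k @[k --> \oo] --> 0 -> (forall k, s k != 0) ->
  (forall k, `|a k| <= M) ->
  ((phi (x + s k *: a k) - phi x) / s k - 'd phi x (a k)) @[k --> \oo] --> 0.
Proof.
move=> dphi s0 s_neq0 aM.
have M1 : 0 < M + 1 by rewrite ltr_wpDl // (le_trans _ (aM 0%N)).
have /eqaddoP phi_o := diff_locally dphi.
have sa0 := cvg_scaler0_bounded s0 aM.
apply/cvgr0Pnorm_le => e e0.
have e'0 : 0 < e / (M + 1) by rewrite divr_gt0.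
have near_small := sa0 _ (phi_o _ e'0).
near=> k.
have small : `|phi (s k *: a k + x) - (phi x + 'd phi x (s k *: a k))| <=
    e / (M + 1) * `|s k *: a k| by near: k; exact: near_small.
rewrite [s k *: a k + x]addrC linearZ /= normrZ in small.
have sk0 : 0 < `|s k| by rewrite normr_gt0.
have -> : (phi (x + s k *: a k) - phi x) / s k - 'd phi x (a k) =
    (phi (x + s k *: a k) - (phi x + s k *: 'd phi x (a k))) / s k.
  by rewrite /GRing.scale /=; field.
rewrite normrM normfV ler_pdivrMr //; apply: le_trans small _.
have eM : e / (M + 1) * (M + 1) = e by rewrite divfK // gt_eqF.
move: (e / (M + 1)) e'0 eM => e' e'0 <-.
rewrite -mulrA ler_wpM2l ?(ltW e'0) // mulrC.
by rewrite ler_wpM2r ?normr_ge0 // (le_trans (aM k)) // lerDl.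
Unshelve. all: by end_near.
Qed.

Lemma is_derive_line n (f : 'rV[R]_n -> R) (x h : 'rV[R]_n) (s : R) :
  (forall z, differentiable f z) ->
  is_derive s (1 : R) (fun r : R => f (x + r *: h)) ('d f (x + s *: h) h).
Proof.
move=> df.
have dline : is_diff s (cst x + ( *:%R ^~ h)) (0 + ( *:%R ^~ h)).
  exact: is_diffD (is_diff_cst x s) (is_diff_scalel s h).
have -> : (fun r : R => f (x + r *: h)) = f \o (cst x + ( *:%R ^~ h)) by [].
have dphi : differentiable (f \o (cst x + ( *:%R ^~ h))) s.
  by apply: differentiable_comp => //; apply: ex_diff.
split; first exact: diff_derivable.
rewrite (deriveE _ dphi).
have := congr1 (fun q => q 1) (diff_comp ex_diff (df ((cst x + ( *:%R ^~ h)) s))).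
move=> /= ->.
have := congr1 (fun q => q 1) (@diff_val _ _ _ _ _ _ _ dline).
by move=> /= ->; rewrite add0r scale1r.
Qed.

(* Mean value theorem for [r |-> f (x + r h) - a r - b r^2 / 2] on [0, 1]. *)
Lemma mvt_quadratic n (f : 'rV[R]_n -> R) (x h : 'rV[R]_n) (a b : R) :
  (forall z, differentiable f z) ->
  exists2 c, 0 < c < 1 &
    f (x + h) - f x - a - b / 2 = 'd f (x + c *: h) h - a - c * b.
Proof.
move=> df.
pose p : R -> R := (id * cst a) + (cst (b / 2)) * (id ^+ 2).
pose psi : R -> R := (fun r : R => f (x + r *: h)) - p.
have dp s : is_derive s (1 : R) p (a + s * b).
  have := is_deriveD (is_deriveM (is_derive_id s (1:R)) (is_derive_cst a s (1:R)))
    (is_deriveM (is_derive_cst (b / 2) s (1:R)) (is_deriveX 2 (is_derive_id s (1:R)))).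
  by move/is_derive_eq; apply; rewrite /= /cst /GRing.scale /=; field.
have dpsi s : is_derive s (1 : R) psi ('d f (x + s *: h) h - (a + s * b)).
  exact: is_deriveB (is_derive_line x h s df) (dp s).
have [c c01 E] := @MVT R psi (fun s => 'd f (x + s *: h) h - (a + s * b)) 0 1 ltr01
  (fun s _ => dpsi s)
  (derivable_within_continuous (fun s _ => @ex_derive _ _ _ _ _ _ _ (dpsi s))).
exists c; first by move: c01; rewrite in_itv.
have : f (x + 1 *: h) - (1 * a + b / 2 * (1 * 1))
    - (f (x + 0 *: h) - (0 * a + b / 2 * (0 * 0)))
    = ('d f (x + c *: h) h - (a + c * b)) * (1 - 0) := E.
rewrite scale1r scale0r addr0; lra.
Qed.

Lemma second_quotient_identity n (F fx t c Q Dy D0 : R) (a A B D : 'I_n -> R) :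
  t != 0 ->
  F - fx - t * D0 - t ^+ 2 * Q / 2 = Dy - t * D0 - c * (t ^+ 2 * Q) ->
  Dy = t * \sum_(j < n) a j * A j -> D0 = \sum_(j < n) a j * B j ->
  (F - fx - t * D0) / t ^+ 2 =
    2^-1 * Q + (\sum_(j < n) a j * ((A j - B j) / t - c * D j)
      + c * (\sum_(j < n) a j * D j - Q)).
Proof.
move=> t0 E DyE D0E; rewrite DyE D0E in E; rewrite D0E.
have -> : \sum_(j < n) a j * ((A j - B j) / t - c * D j) =
    (\sum_(j < n) a j * A j) / t - (\sum_(j < n) a j * B j) / t
    - c * \sum_(j < n) a j * D j.
  rewrite mulr_sumr !mulr_suml -!sumrB; apply: eq_bigr => j _; ring.
move: (\sum_(j < n) a j * A j) (\sum_(j < n) a j * B j) (\sum_(j < n) a j * D j) E.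
move=> SA SB SD E.
have -> : F = fx + t * SB + t ^+ 2 * Q / 2 + (t * SA - t * SB - c * (t ^+ 2 * Q)).
  by rewrite -E; ring.
by field.
Qed.

(* Subtracting the quadratic [c Q] in the mean value step makes the residual
   [c (r - Q)] vanish in the limit whatever the intermediate points [c] do. *)
Lemma second_quotient_mvt n (f : 'rV[R]_n -> R) (x u : 'rV[R]_n) (t Q : R) :
  (forall z, differentiable f z) -> t != 0 ->
  exists c, 0 < c < 1 /\
    (f (x + t *: u) - f x - t * 'd f x u) / t ^+ 2 =
    2^-1 * Q + (\sum_(j < n) u 0 j *
      (('d f (x + t *: (c *: u)) 'e_j - 'd f x 'e_j) / t
       - c * 'd (fun z => 'd f z 'e_j) x u)
      + c * (\sum_(j < n) u 0 j * 'd (fun z => 'd f z 'e_j) x u - Q)).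
Proof.
move=> df t0.
have [c c01 E] := mvt_quadratic x (t *: u) (t * 'd f x u) (t ^+ 2 * Q) df.
exists c; split => //.
rewrite (_ : x + c *: (t *: u) = x + t *: (c *: u)) in E; last by rewrite !scalerA mulrC.
set y := x + t *: (c *: u) in E *.
have Dy := etrans (linearZZ ('d f y) t u) (congr1 (GRing.mul t) (linear_coord_sum ('d f y) u)).
exact: (second_quotient_identity _ t0 E Dy (linear_coord_sum ('d f x) u)).
Qed.

Lemma cvg_second_quotient n (f : 'rV[R]_n -> R) (x : 'rV[R]_n) (t : nat -> R)
    (u : nat -> 'rV[R]_n) (d : 'rV[R]_n) :
  (forall z, differentiable f z) -> (forall v, differentiable (fun z => 'd f z v) x) ->
  (forall k, 0 < t k) -> t k @[k --> \oo] --> 0 -> u k @[k --> \oo] --> d ->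
  ((f (x + t k *: u k) - f x - t k * 'd f x (u k)) / t k ^+ 2) @[k --> \oo] -->
    2^-1 * D2 f x d d.
Proof.
move=> df d2f t0 t_0 u_d; set Q := D2 f x d d.
pose phi j := fun z => 'd f z 'e_j.
have [B uB] := cvgn_normr_ub u_d.
have [c Hc] := choice (fun k => second_quotient_mvt x (u k) Q df (lt0r_neq0 (t0 k))).
have c_bound k : `|c k| <= 1.
  by have [/andP[c0 c1] _] := Hc k; rewrite ger0_norm ltW.
have -> : (fun k => (f (x + t k *: u k) - f x - t k * 'd f x (u k)) / t k ^+ 2) =
    fun k => 2^-1 * Q + (\sum_(j < n) u k 0 j *
      ((phi j (x + t k *: (c k *: u k)) - phi j x) / t k - c k * 'd (phi j) x (u k))
      + c k * (\sum_(j < n) u k 0 j * 'd (phi j) x (u k) - Q)).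
  by apply/funext => k; exact: (Hc k).2.
rewrite -[X in _ --> X]addr0; apply: cvgD; first exact: cvg_cst.
rewrite -[X in _ --> X]addr0; apply: cvgD.
  have sum0 : \sum_(j < n) d 0 j * 0 = 0 :> R by rewrite big1 // => j _; rewrite mulr0.
  rewrite -[X in _ --> X]sum0.
  apply: cvg_big => // [|j _]; first exact: add_continuous.
  apply: cvgM; first exact: cvg_coord.
  have cu_bound k : `|c k *: u k| <= B.
    by rewrite normrZ (le_trans (ler_wpM2r (normr_ge0 _) (c_bound k))) ?mul1r.
  rewrite (_ : (fun k => _ - c k * 'd (phi j) x (u k)) =
      fun k => (phi j (x + t k *: (c k *: u k)) - phi j x) / t k - 'd (phi j) x (c k *: u k)).
    exact: cvg_diff_quotient (d2f 'e_j) t_0 (fun k => lt0r_neq0 (t0 k)) cu_bound.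
  by apply/funext => k; rewrite (linearZZ ('d (phi j) x)).
have r_Q : (\sum_(j < n) u k 0 j * 'd (phi j) x (u k) - Q) @[k --> \oo] --> 0.
  rewrite -[X in _ --> X](subrr Q); apply: cvgB; last exact: cvg_cst.
  rewrite [X in _ --> X](D2_coord_sum _ _ (fun j => d2f 'e_j)).
  apply: cvg_big => // [|j _]; first exact: add_continuous.
  apply: cvgM; first exact: cvg_coord.
  apply: continuous_cvg u_d.
  by have := diff_continuous (d2f 'e_j); apply.
rewrite (eq_cvg _ _ (fun k => mulrC (c k) _)).
exact: cvg_scaler0_bounded r_Q c_bound.
Qed.

End taylor.

Section tangent_cone.
Variable R : realType.
Local Set Implicit Arguments. Local Unset Strict Implicit.

Lemma tcone0 n (S : set 'rV[R]_n) x : S x -> tcone S x 0.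
Proof.
move=> Sx; exists harmonic, (fun _ => 0); split; first by move=> k; rewrite invr_gt0 ltr0n.
split; first exact: cvg_harmonic.
by split; [exact: cvg_cst | move=> k; rewrite scaler0 addr0].
Qed.

Lemma cvg_subseq_tcone n (S : set 'rV[R]_n) x (t : nat -> R) (v : nat -> 'rV[R]_n) M :
  (forall k, 0 < t k) -> t k @[k --> \oo] --> 0 -> (forall k, S (x + t k *: v k)) ->
  (forall k, `|v k| <= M) ->
  exists2 p, tcone S x p & exists2 kk : nat -> nat,
    (forall j, (j <= kk j)%N) & v (kk j) @[j --> \oo] --> p.
Proof.
move=> t0 t_0 Sv vM; have [p [kk kk_ge vp]] := cvg_subseq_bounded vM.
exists p; last by exists kk.
by exists (fun j => t (kk j)), (fun j => v (kk j)); do !split => //; exact: cvg_subseq.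
Qed.

(* The points of [S] within [rho t_k] of [x + t_k u_k] have difference quotients
   within [rho] of [u_k]; a cluster point of these quotients is a tangent direction. *)
Lemma eucl_dist_tcone_le n (S : set 'rV[R]_n) x (t : nat -> R) (u : nat -> 'rV[R]_n)
    d rho :
  S x -> (forall k, 0 < t k) -> t k @[k --> \oo] --> 0 -> u k @[k --> \oo] --> d ->
  (\forall k \near \oo, eucl_dist (x + t k *: u k) S < rho * t k) ->
  eucl_dist d (tcone S x) <= rho.
Proof.
move=> Sx t0 t_0 u_d [N _ near_S].
have [B uB] := cvgn_normr_ub u_d.
pose tN k := t (k + N)%N; pose uN k := u (k + N)%N.
have tN_0 : tN k @[k --> \oo] --> 0 by apply: cvg_subseq t_0 _ => k; exact: leq_addr.
have uN_d : uN k @[k --> \oo] --> d by apply: cvg_subseq u_d _ => k; exact: leq_addr.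
have /choice [s Ss] k : exists s, S s /\ enorm (x + tN k *: uN k - s) < rho * tN k.
  have [s ? ?] := eucl_dist_lt (ex_intro _ x Sx) (near_S _ (leq_addl k N)).
  by exists s.
pose v k := (tN k)^-1 *: (s k - x).
have xv k : x + tN k *: v k = s k.
  have tN0 : tN k != 0 := lt0r_neq0 (t0 _).
  by rewrite /v scalerA mulfV // scale1r addrC subrK.
have uv k : enorm (uN k - v k) < rho.
  have [_] := Ss k; rewrite -{1}(xv k) opprD addrACA subrr add0r -scalerBr.
  have tN0 : 0 < tN k := t0 _.
  by rewrite enormZ gtr0_norm // [rho * _]mulrC ltr_pM2l.
have vB k : `|v k| <= B + rho.
  have -> : v k = uN k - (uN k - v k) by rewrite opprB addrC subrK.
  apply: le_trans (ler_normB _ _) _; apply: lerD; first exact: uB.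
  exact: le_trans (normr_le_enorm _) (ltW (uv k)).
have [p Tp [kk kk_ge v_p]] := cvg_subseq_tcone (fun k => t0 _) tN_0
  (fun k => eq_ind _ S (Ss k).1 _ (esym (xv k))) vB.
apply: le_trans (eucl_dist_le d Tp) _.
have : enorm (uN (kk j) - v (kk j)) @[j --> \oo] --> enorm (d - p).
  by apply: cvg_enorm; apply: cvgB => //; exact: cvg_subseq.
by apply: (closed_cvg _ (@closed_le R rho)); apply: nearW => j; exact: ltW.
Qed.

Lemma eucl_dist_tcone_sqr_le n (S : set 'rV[R]_n) x (t : nat -> R) (u : nat -> 'rV[R]_n)
    d (m : nat -> R) kappa l :
  S x -> 0 < kappa -> (forall k, 0 < t k) -> t k @[k --> \oo] --> 0 ->
  u k @[k --> \oo] --> d -> m k @[k --> \oo] --> l ->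
  (\forall k \near \oo, kappa * (eucl_dist (x + t k *: u k) S / t k) ^+ 2 <= m k) ->
  kappa * eucl_dist d (tcone S x) ^+ 2 <= l.
Proof.
move=> Sx k0 t0 t_0 u_d m_l near_m.
have l0 : 0 <= l.
  apply: (closed_cvg _ (@closed_ge R 0) _ _ m_l); apply: filterS near_m => k.
  by apply: le_trans; rewrite mulr_ge0 ?sqr_ge0 ?ltW.
have Sne : S !=set0 by exists x.
set b := Num.sqrt (l / kappa).
have b0 : 0 <= b := sqrtr_ge0 _.
have kb2 : kappa * b ^+ 2 = l.
  by rewrite sqr_sqrtr ?divr_ge0 ?(ltW k0) // mulrCA divff ?mulr1 ?lt0r_neq0.
suff d0b : eucl_dist d (tcone S x) <= b.
  rewrite -kb2 ler_pM2l // ler_sqr ?nnegrE //.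
  exact: eucl_dist_ge0 (ex_intro _ 0 (tcone0 Sx)).
apply/ler_addgt0Pr => e e0.
apply: (eucl_dist_tcone_le Sx t0 t_0 u_d).
have lbe : l < kappa * (b + e) ^+ 2.
  rewrite -kb2 ltr_pM2l // ltr_sqr ?nnegrE ?(addr_ge0 b0 (ltW e0)) //.
  by rewrite ltrDl.
apply: filterS2 near_m (cvgr_lt _ m_l _ lbe) => k kDm mk.
have Dt0 : 0 <= eucl_dist (x + t k *: u k) S / t k.
  by rewrite divr_ge0 ?(eucl_dist_ge0 _ Sne) ?(ltW (t0 k)).
rewrite -ltr_pdivrMr // -ltr_sqr ?nnegrE ?(addr_ge0 b0 (ltW e0)) //.
by rewrite -(ltr_pM2l k0); apply: le_lt_trans kDm mk.
Qed.

End tangent_cone.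

Section second_order_conditions.
Variable R : realType.
Local Set Implicit Arguments. Local Unset Strict Implicit.

Lemma diff_ge0_tsetpp n (f : 'rV[R]_n -> R) (Phi : set 'rV[R]_n) x d w :
  (forall z, differentiable f z) -> (forall v, differentiable (fun z => 'd f z v) x) ->
  (forall y, Phi y -> f x <= f y) -> 'd f x d <= 0 -> tsetpp Phi x d w ->
  0 <= 'd f x w.
Proof.
move=> df d2f fmin dd [t [r [wk [t0 [r0 [t_0 [r_0 [tr_0 [w_lim Phi_k]]]]]]]]].
pose u k := d + (2^-1 * r k) *: wk k.
have xu k : x + t k *: u k = x + t k *: d + (2^-1 * t k * r k) *: wk k.
  by rewrite /u scalerDr addrA scalerA mulrCA mulrA.
have u_d : u k @[k --> \oo] --> d.
  apply: cvg_addr_scaler0 w_lim.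
  by have := cvgM (cvg_cst (2^-1 : R)) r_0; rewrite mulr0; apply.
have du k : 'd f x (u k) = 'd f x d + 2^-1 * r k * 'd f x (wk k).
  by rewrite (linearD ('d f x)) (linearZZ ('d f x)).
pose q k := (f (x + t k *: u k) - f x - t k * 'd f x (u k)) / t k ^+ 2.
have q_ge0 k : 0 <= 'd f x (wk k) + 2 * (t k / r k) * q k.
  have : f x <= f (x + t k *: u k) by rewrite xu; apply: fmin; exact: Phi_k.
  rewrite /q du; move: (f (x + t k *: u k)) (f x) ('d f x d) dd ('d f x (wk k)).
  move=> F fx D D0 W fF; have tk0 := t0 k; have rk0 := r0 k.
  have -> : W + 2 * (t k / r k) * ((F - fx - t k * (D + 2^-1 * r k * W)) / t k ^+ 2) =
      2 * (F - fx) / (t k * r k) + 2 * - D / r k.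
    by field; rewrite (lt0r_neq0 rk0) (lt0r_neq0 tk0).
  by rewrite addr_ge0 // divr_ge0 ?mulr_ge0 ?subr_ge0 ?oppr_ge0 // ltW.
have : 'd f x (wk k) + 2 * (t k / r k) * q k @[k --> \oo] -->
    'd f x w + 2 * 0 * (2^-1 * D2 f x d d).
  apply: cvgD.
    by apply: continuous_cvg w_lim; have := diff_continuous (df x); apply.
  by apply: cvgM; [apply: cvgM => //; exact: cvg_cst | exact: cvg_second_quotient].
rewrite mulr0 mul0r addr0 => lim.
by apply: (closed_cvg _ (@closed_ge R 0) _ _ lim); apply: nearW.
Qed.

Lemma dist_tcone_tset2_le n (f : 'rV[R]_n -> R) (Phi S : set 'rV[R]_n) x xbar
    (delta kappa : R) d w :
  (forall z, differentiable f z) -> (forall v, differentiable (fun z => 'd f z v) x) ->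
  0 < kappa -> S x ->
  (forall y, Phi y -> enorm (y - xbar) < delta -> f x + kappa * eucl_dist y S ^+ 2 <= f y) ->
  enorm (x - xbar) < delta -> 'd f x d <= 0 -> tset2 Phi x d w ->
  2 * kappa * eucl_dist d (tcone S x) ^+ 2 <= 'd f x w + D2 f x d d.
Proof.
move=> df d2f k0 Sx sharp xd dd [t [wk [t0 [t_0 [w_lim Phi_k]]]]].
pose u k := d + (2^-1 * t k) *: wk k.
have xu k : x + t k *: u k = x + t k *: d + (2^-1 * t k ^+ 2) *: wk k.
  by rewrite /u scalerDr addrA scalerA mulrCA -expr2.
have u_d : u k @[k --> \oo] --> d.
  apply: cvg_addr_scaler0 w_lim.
  by have := cvgM (cvg_cst (2^-1 : R)) t_0; rewrite mulr0; apply.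
have du k : 'd f x (u k) = 'd f x d + 2^-1 * t k * 'd f x (wk k).
  by rewrite (linearD ('d f x)) (linearZZ ('d f x)).
pose q k := (f (x + t k *: u k) - f x - t k * 'd f x (u k)) / t k ^+ 2.
pose m k := 2^-1 * 'd f x (wk k) + q k.
have m_l : m k @[k --> \oo] --> 2^-1 * 'd f x w + 2^-1 * D2 f x d d.
  apply: cvgD; last exact: cvg_second_quotient.
  apply: cvgM; first exact: cvg_cst.
  by apply: continuous_cvg w_lim; have := diff_continuous (df x); apply.
have near_delta : \forall k \near \oo, enorm (x + t k *: u k - xbar) < delta.
  apply: (cvgr_lt _ _ _ xd); apply: cvg_enorm; apply: cvgB; last exact: cvg_cst.
  exact: cvg_addr_scaler0 t_0 u_d.
have near_m : \forall k \near \oo,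
    kappa * (eucl_dist (x + t k *: u k) S / t k) ^+ 2 <= m k.
  apply: filterS near_delta => k near_k.
  have := sharp _ (eq_ind _ Phi (Phi_k k) _ (esym (xu k))) near_k.
  rewrite /m /q du; move: (f (x + t k *: u k)) (f x) ('d f x d) dd ('d f x (wk k)).
  move: (eucl_dist (x + t k *: u k) S) => D F fx Dd Dd0 W fF; have tk0 := t0 k.
  have -> : 2^-1 * W + (F - fx - t k * (Dd + 2^-1 * t k * W)) / t k ^+ 2 =
      (F - fx - t k * Dd) / t k ^+ 2 by field; rewrite lt0r_neq0.
  rewrite expr_div_n mulrA ler_pM2r ?invr_gt0 ?exprn_gt0 //.
  have : 0 <= - (t k * Dd) by rewrite oppr_ge0 mulr_ge0_le0 // ltW.
  lra.
have := eucl_dist_tcone_sqr_le Sx k0 t0 t_0 u_d m_l near_m.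
move: (eucl_dist d _) ('d f x w) (D2 f x d d) => a b c; lra.
Qed.

End second_order_conditions.

Theorem theorem3p3 (R : realType) (n m : nat)
  (f : 'rV[R]_n -> R) (g : 'rV[R]_n -> 'rV[R]_m) (K : set 'rV[R]_m)
  (xbar : 'rV[R]_n) (kappa delta : R) :
  C2 f -> C2 g -> closed K -> solset f g K !=set0 ->
  0 < kappa -> 0 < delta ->
  so_weak_sharp f g K xbar kappa delta ->
  forall x, solset f g K x -> enorm (x - xbar) < delta ->
  forall d, critcone f g K x d ->
  forall lam : 'rV[R]_m, (forall v, 'd (Lag f g lam) x v = 0) ->
    (suppf [set 'd g x w | w in tsetpp (feas g K) x d] lam <= 0)%E /\
    ((D2 (Lag f g lam) x d d)%:E
       - suppf [set ('d g x w + D2 g x d d)%R | w in tset2 (feas g K) x d] lam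
     >= (2 * kappa * eucl_dist d (tcone (solset f g K) x) ^+ 2)%:E)%E.
Proof.
move=> [df [d2f _]] [dg [d2g _]] _ _ k0 _ [xbarF sharp] x xS xd d [_ dfd] lam dL.
have fmin := xS.2.
have dfg v : 'd f x v = - dotv ('d g x v) lam.
  by apply/eqP; rewrite -subr_eq0 opprK -(diff_Lag lam v (df x) (dg x)) dL.
split.
  apply: ub_ereal_sup => _ [_ [w Tw <-] <-]; rewrite lee_fin.
  by rewrite -oppr_ge0 -dfg; exact: diff_ge0_tsetpp (fun v => d2f v x) fmin dfd Tw.
have sharp_x y : feas g K y -> enorm (y - xbar) < delta ->
    f x + kappa * eucl_dist y (solset f g K) ^+ 2 <= f y.
  by move=> Fy yd; apply: le_trans (sharp y Fy yd); rewrite lerD2r fmin.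
have : (suppf [set ('d g x w + D2 g x d d)%R | w in tset2 (feas g K) x d] lam <=
    (D2 (Lag f g lam) x d d - 2 * kappa * eucl_dist d (tcone (solset f g K) x) ^+ 2)%:E)%E.
  apply: ub_ereal_sup => _ [_ [w T2w <-] <-]; rewrite lee_fin dotvDl.
  rewrite (D2_Lag lam d df dg (d2f d x) (d2g d x)) -[dotv ('d g x w) lam]opprK -dfg.
  have := dist_tcone_tset2_le df (fun v => d2f v x) k0 xS sharp_x xd dfd T2w.
  by move: (eucl_dist d _) ('d f x w) (D2 f x d d) (dotv _ lam) => a b c e; lra.
case: (suppf _ _) => [s| |] //=; last by rewrite leey.
rewrite -EFinB !lee_fin.
by move: (D2 _ x d d) (2 * kappa * _) => a c; lra.
Qed.
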